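(* Let $G$ be a finite simple chordal graph. The following are equivalent: (i) $\gamma(G)=\alpha(G)$; (ii) $G$ is well-covered; (iii) $G$ is well-dominated; (iv) $V(G)$ is the disjoint union of maximal cliques of $G$ each of which contains a free vertex.
   Context: A dominating set of $G$ is a set $D\subseteq V(G)$ such that every vertex lies in $D$ or is adjacent to a vertex of $D$; $\gamma(G)$ is the minimum size of a dominating set, and $G$ is well-dominated if all minimal (under inclusion) dominating sets have the same size. $\alpha(G)$ is the maximum size of an independent set; $G$ is well-covered if all maximal independent sets have the same size. A clique is a set of pairwise adjacent vertices; a free vertex is a vertex belonging to exactly one maximal clique. A graph is chordal if every cycle of length at least $4$ has a chord. *)

From mathcomp Require Import all_boot.
Set Implicit Arguments. Unset Strict Implicit. Unset Printing Implicit Defensive.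

Definition simple_graph (T : finType) (e : rel T) : Prop :=
  symmetric e /\ irreflexive e.

Section Graph.
Variables (T : finType) (e : rel T).

Definition dominating (D : {set T}) : bool :=
  [forall x, (x \in D) || [exists y in D, e x y]].

Definition independent (S : {set T}) : bool :=
  [forall x in S, forall y in S, ~~ e x y].

Definition clique (K : {set T}) : bool :=
  [forall x in K, forall y in K, (x != y) ==> e x y].

(* gamma(G): minimum size of a dominating set (setT always dominates). *)
Definition domination_number : nat :=
  \big[minn/#|T|]_(D : {set T} | dominating D) #|D|.

Definition independence_number : nat :=
  \max_(S : {set T} | independent S) #|S|.

Definition well_covered : Prop :=
  forall S1 S2 : {set T}, maxset independent S1 -> maxset independent S2 ->
    #|S1| = #|S2|.

Definition well_dominated : Prop :=
  forall D1 D2 : {set T}, minset dominating D1 -> minset dominating D2 ->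
    #|D1| = #|D2|.

Definition maximal_clique (K : {set T}) : bool := maxset clique K.

Definition free_vertex (v : T) : bool :=
  #|[set K : {set T} | maximal_clique K & v \in K]| == 1.

(* chordal: every cycle of length >= 4 (given as a duplicate-free sequence
   of vertices, consecutive ones adjacent, last adjacent to first) has a chord,
   i.e. an edge between two vertices not consecutive on the cycle. *)
Definition chordal : Prop :=
  forall s : seq T, uniq s -> 4 <= size s -> cycle e s ->
    exists x0 : T, exists i j : nat,
      [/\ i < j < size s, j != i.+1, ~~ ((i == 0) && (j == (size s).-1))
        & e (nth x0 s i) (nth x0 s j)].

End Graph.

From mathcomp Require Import all_boot zify.
Set Implicit Arguments. Unset Strict Implicit. Unset Printing Implicit Defensive.

(* Maximal independent sets are the independent dominating sets, hence minimal
   dominating sets, and gamma <= |S| <= alpha for each of them: this gives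
   (i) -> (ii) and (iii) -> (ii).
   If V is partitioned into maximal cliques with a free vertex, an independent
   set meets each block at most once, a dominating set meets every block (a
   dominator of the free vertex lies in its block), and a minimal dominating set
   injects into the blocks via private neighbours; so all of gamma, alpha and
   the sizes of maximal independent and minimal dominating sets equal the
   number of blocks: (iv) -> (i), (ii), (iii).
   For (ii) -> (iv) it suffices that every vertex of a well-covered chordal
   graph lies in the closed neighbourhood N[s] of a simplicial vertex s: two such
   simplices are disjoint or equal, since otherwise their simplicial vertices
   could replace a common vertex of a maximal independent set. The covering is
   proved by induction on induced subgraphs, which stay well-covered when N[v]
   is deleted: for t simplicial (Dirac), each simplex of G - N[t] is a simplex
   of G, because otherwise chordality yields a common neighbour u in N[t] of its
   simplicial vertices, and an exchange around u contradicts well-coveredness. *)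

Section Shortcut.
Variables (T : eqType) (e : rel T).

Definition shortcut (q : seq T) i j := take i.+1 q ++ drop j q.

Lemma size_shortcut q i j : i < j < size q ->
  size (shortcut q i j) = i.+1 + (size q - j).
Proof. by move=> ijq; rewrite size_cat size_drop size_takel //; lia. Qed.

Lemma size_shortcut_gt1 q i j : i < j < size q -> 1 < size (shortcut q i j).
Proof. by move=> ijq; rewrite size_shortcut //; lia. Qed.

Lemma size_shortcut_lt q i j : i.+1 < j < size q -> size (shortcut q i j) < size q.
Proof. by move=> ijq; rewrite size_shortcut; lia. Qed.

Lemma nth_shortcut x0 q i j k : i < j < size q ->
  nth x0 (shortcut q i j) k = nth x0 q (if k <= i then k else j + (k - i.+1)).
Proof.
move=> ijq; rewrite nth_cat size_takel; last by lia.
case: ifP => ki; first by rewrite ifT ?nth_take //; lia.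
by rewrite ifF ?nth_drop //; lia.
Qed.

Lemma head_shortcut x0 q i j : i < j < size q -> head x0 (shortcut q i j) = head x0 q.
Proof. by move=> ijq; rewrite -!nth0 nth_shortcut. Qed.

Lemma last_shortcut x0 q i j : i < j < size q -> last x0 (shortcut q i j) = last x0 q.
Proof.
move=> ijq; rewrite -!(nth_last x0) nth_shortcut // size_shortcut // ifF; last by lia.
congr nth; lia.
Qed.

Lemma shortcut_subseq q i j : i < j -> subseq (shortcut q i j) q.
Proof.
move=> ij; rewrite -[X in subseq _ X](cat_take_drop j) /shortcut.
by rewrite -(take_takel _ ij) cat_subseq ?take_subseq.
Qed.

Lemma sorted_shortcut x0 q i j : i < j < size q ->
  e (nth x0 q i) (nth x0 q j) -> sorted e q -> sorted e (shortcut q i j).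
Proof.
move=> ijq eij /(sortedP x0) eq_step; apply/(sortedP x0) => k.
rewrite size_shortcut // => kq; rewrite !nth_shortcut //.
case: (ltngtP k i) => [ki|ik|->]; first by apply: eq_step; lia.
  rewrite (_ : j + (k.+1 - i.+1) = (j + (k - i.+1)).+1); last by lia.
  by apply: eq_step; lia.
by rewrite subnn addn0.
Qed.

End Shortcut.

Lemma bigmin_leq (I : finType) (P : pred I) (F : I -> nat) m i :
  P i -> \big[minn/m]_(j | P j) F j <= F i.
Proof.
move=> Pi; elim: (index_enum I) (mem_index_enum i) => [//|j r IH].
rewrite inE big_cons => /predU1P[<-|ir]; first by rewrite Pi geq_minl.
by case: (P j); rewrite ?(leq_trans (geq_minr _ _)) ?IH.
Qed.

Section Graph.
Variables (T : finType) (e : rel T).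
Hypotheses (sym_e : symmetric e) (irr_e : irreflexive e).

(** * Neighbourhoods, independent and dominating sets *)

(* An induced subgraph is given by its vertex set [U]; [nbhd U v] is the closed
   neighbourhood of [v] in it. *)
Definition nbhd (U : {set T}) v := [set z in U | (z == v) || e v z].

Definition simplicial (U : {set T}) v := (v \in U) && clique e (nbhd U v).

Definition max_independent (U S : {set T}) :=
  [&& S \subset U, independent e S & [forall y in U, (y \in S) || [exists s in S, e y s]]].

Definition well_covered_on (U : {set T}) :=
  forall S1 S2, max_independent U S1 -> max_independent U S2 -> #|S1| = #|S2|.

Definition covered_by_simplices (U : {set T}) :=
  {in U, forall v, exists2 s, simplicial U s & v \in nbhd U s}.

Lemma nbhd_sub (U : {set T}) v : nbhd U v \subset U.
Proof. by apply/subsetP=> z; rewrite inE => /andP[]. Qed.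

Lemma in_setD_nbhd (U : {set T}) v z :
  (z \in U :\: nbhd U v) = [&& z \in U, z != v & ~~ e v z].
Proof. by rewrite !inE; case: (z \in U); rewrite /= ?negb_or ?andbT. Qed.

Lemma in_nbhdT v z : (z \in nbhd setT v) = (z == v) || e v z.
Proof. by rewrite !inE. Qed.

Lemma mem_nbhdC (U : {set T}) u v :
  u \in U -> v \in U -> (u \in nbhd U v) = (v \in nbhd U u).
Proof. by move=> uU vU; rewrite !inE uU vU eq_sym sym_e. Qed.

Lemma card_nbhdD (U : {set T}) v : v \in U -> #|U :\: nbhd U v| < #|U|.
Proof.
move=> vU; rewrite proper_card //; apply/properP.
by split; [exact: subsetDl | exists v; rewrite // in_setD_nbhd eqxx andbF].
Qed.

Lemma cliqueP (K : {set T}) : reflect {in K &, forall x y, x != y -> e x y} (clique e K).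
Proof.
apply: (iffP forall_inP) => [cK x y xK yK|cK x xK].
  by move/forall_inP/(_ y yK)/implyP: (cK x xK).
by apply/forall_inP => y yK; apply/implyP; apply: cK.
Qed.

Lemma independentP (S : {set T}) : reflect {in S &, forall x y, ~~ e x y} (independent e S).
Proof.
apply: (iffP forall_inP) => [iS x y xS|iS x xS]; first exact: (forall_inP (iS x xS)).
by apply/forall_inP => y; apply: iS xS.
Qed.

Lemma sub_clique (A B : {set T}) : A \subset B -> clique e B -> clique e A.
Proof. by move/subsetP=> AB /cliqueP cB; apply/cliqueP=> x y /AB xB /AB; apply: cB. Qed.

Lemma sub_independent (A B : {set T}) : A \subset B -> independent e B -> independent e A.
Proof.
by move/subsetP=> AB /independentP iB; apply/independentP=> x y /AB xB /AB; apply: iB.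
Qed.

Lemma independentU1 a (S : {set T}) :
  independent e S -> {in S, forall s, ~~ e a s} -> independent e (a |: S).
Proof.
move=> /independentP iS aS; apply/independentP => x y /setU1P[->|xS] /setU1P[->|yS].
- by rewrite irr_e.
- exact: aS.
- by rewrite sym_e aS.
- exact: iS.
Qed.

Lemma clique_independent_eq (K S : {set T}) x y : clique e K -> independent e S ->
  x \in K -> y \in K -> x \in S -> y \in S -> x = y.
Proof.
move=> /cliqueP cK /independentP iS xK yK xS yS; apply/eqP/negPn/negP=> nxy.
by move: (iS x y xS yS); rewrite cK.
Qed.

Lemma not_clique_nbhd (K : {set T}) :
  ~~ clique e K -> exists x y, x \in K /\ y \in K :\: nbhd K x.
Proof.
move=> ncK; have [/existsP[x /andP[xK /set0Pn[y yKx]]]|/existsPn none] :=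
  boolP [exists x, (x \in K) && (K :\: nbhd K x != set0)]; first by exists x, y.
case/negP: ncK; apply/cliqueP=> x y xK yK nxy.
move: (none x); rewrite xK negbK => /eqP/setP/(_ y); rewrite !inE yK /= andbT.
by move/negbFE/orP=> [/eqP yx|//]; rewrite yx eqxx in nxy.
Qed.

Lemma clique_sub_nbhd (U K : {set T}) v :
  K \subset U -> clique e K -> v \in K -> K \subset nbhd U v.
Proof.
move=> /subsetP KU /cliqueP cK vK; apply/subsetP=> z zK; rewrite inE KU //=.
by have [//|zv] := eqVneq z v; rewrite cK // eq_sym.
Qed.

Lemma simplicial_nbhd_sub (U : {set T}) s v :
  simplicial U s -> v \in nbhd U s -> nbhd U s \subset nbhd U v.
Proof. by case/andP=> _ cs; apply: clique_sub_nbhd (nbhd_sub U s) cs. Qed.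

Lemma simplicial_sub (U W : {set T}) s :
  W \subset U -> nbhd U s \subset W -> simplicial W s -> simplicial U s.
Proof.
move=> /subsetP WU /subsetP sW /andP[sW' cs]; rewrite /simplicial WU //=.
apply: sub_clique cs; apply/subsetP=> z zs; rewrite inE sW //.
by move: zs; rewrite inE => /andP[].
Qed.

Lemma max_independentP (U S : {set T}) :
  reflect [/\ S \subset U, independent e S & {in U :\: S, forall y, exists2 s, s \in S & e y s}]
          (max_independent U S).
Proof.
apply: (iffP and3P) => [[SU iS /forall_inP domS]|[SU iS domS]]; split=> //.
  by move=> y /setDP[yU /negbTE yS]; move: (domS y yU); rewrite yS => /exists_inP.
apply/forall_inP=> y yU; case yS: (y \in S) => //=.
by apply/exists_inP; apply: domS; rewrite inE yS.
Qed.

Lemma max_independent_exists (U S : {set T}) :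
  S \subset U -> independent e S -> exists2 M : {set T}, S \subset M & max_independent U M.
Proof.
move=> SU iS; pose P (X : {set T}) := (X \subset U) && independent e X.
have PS : P S by rewrite /P SU.
have [M /maxsetP[/andP[MU iM] maxM] SM] := maxset_exists PS.
exists M => //; apply/max_independentP; split=> // y /setDP[yU yM].
have [/exists_inP[s sM ys]|/exists_inPn noM] := boolP [exists s in M, e y s].
  by exists s.
suff yM' : y |: M = M by rewrite -yM' setU11 in yM.
apply: maxM (subsetUr _ _); rewrite /P subUset sub1set yU MU /=.
by apply: independentU1 => // s /noM.
Qed.

Lemma max_independentU1 (U S : {set T}) v :
  v \in U -> max_independent (U :\: nbhd U v) S -> max_independent U (v |: S).
Proof.
move=> vU /max_independentP[/subsetP SUv iS domS]; apply/max_independentP; split.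
- rewrite subUset sub1set vU; apply/subsetP=> s /SUv; exact: subsetP (subsetDl _ _) s.
- by apply: independentU1 => // s /SUv; rewrite in_setD_nbhd => /and3P[].
- move=> y /setDP[yU]; rewrite in_setU1 negb_or => /andP[yv yS].
  have [yN|yNv] := boolP (y \in nbhd U v).
    by exists v; rewrite ?setU11 //; move: yN; rewrite inE (negbTE yv) sym_e => /andP[].
  have [|s sS ys] := domS y; first by rewrite in_setD yS in_setD yNv yU.
  by exists s; rewrite ?setU1r.
Qed.

Lemma max_independentT S : max_independent setT S = maxset (independent e) S.
Proof.
apply/idP/maxsetP=> [|[iS maxS]].
  case/max_independentP=> _ iS domS; split=> // B iB SB; apply/eqP.
  rewrite eqEsubset SB andbT; apply/subsetP=> b bB; apply/negPn/negP=> bS.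
  have [|s sS bs] := domS b; first by rewrite !inE bS.
  by move/independentP: iB => /(_ b s bB (subsetP SB s sS)); rewrite bs.
have [M SM maxM] := max_independent_exists (subsetT S) iS.
have iM : independent e M by case/and3P: maxM.
by rewrite -(maxS M iM SM).
Qed.

Lemma well_covered_on_card (U M S : {set T}) : well_covered_on U -> max_independent U M ->
  S \subset U -> independent e S -> #|S| <= #|M|.
Proof.
move=> wcU maxM SU iS; have [S' SS' maxS'] := max_independent_exists SU iS.
by rewrite (wcU _ _ maxM maxS') subset_leq_card.
Qed.

Lemma well_covered_onT : well_covered_on setT <-> well_covered e.
Proof.
by split=> wc S1 S2; [rewrite -!max_independentT | rewrite !max_independentT]; apply: wc.
Qed.

Lemma well_covered_on_nbhdD (U : {set T}) v :
  v \in U -> well_covered_on U -> well_covered_on (U :\: nbhd U v).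
Proof.
move=> vU wcU S1 S2 max1 max2.
have vS S : max_independent (U :\: nbhd U v) S -> v \notin S.
  by case/and3P=> /subsetP SU _ _; apply/negP=> /SU; rewrite in_setD !inE vU eqxx.
move: (wcU _ _ (max_independentU1 vU max1) (max_independentU1 vU max2)).
by rewrite !cardsU1 (vS _ max1) (vS _ max2) => -[].
Qed.

(* Otherwise [s1] and [s2] could replace [w] in a maximal independent set. *)
Lemma well_covered_simplicial_adj (U : {set T}) s1 s2 w :
  well_covered_on U -> simplicial U s1 -> simplicial U s2 ->
  w \in nbhd U s1 -> w \in nbhd U s2 -> s1 \in nbhd U s2.
Proof.
move=> wcU simp1 simp2 ws1 ws2; apply/negPn/negP=> ns12.
have wU : w \in U := subsetP (nbhd_sub U s1) w ws1.
have iw : independent e [set w] by apply/independentP=> x y /set1P-> /set1P->; rewrite irr_e.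
have [M] : exists2 M : {set T}, [set w] \subset M & max_independent U M.
  by apply: max_independent_exists iw; rewrite sub1set.
rewrite sub1set => wM maxM; have /and3P[MU iM _] := maxM.
have Mw s m : simplicial U s -> w \in nbhd U s -> m \in M :\ w -> m \notin nbhd U s.
  case/andP=> _ cs ws /setD1P[mw mM]; apply: contra mw => ms.
  by rewrite (clique_independent_eq cs iM ms ws mM wM).
have sMw s : simplicial U s -> w \in nbhd U s -> s \notin M :\ w.
  move=> simps ws; apply: contraL (Mw s s simps ws) _.
  by case/andP: simps => sU _; rewrite inE sU eqxx.
have notM s m : simplicial U s -> w \in nbhd U s -> m \in M :\ w -> ~~ e s m.
  move=> simps ws mMw; apply: contra (Mw s m simps ws mMw) => sm.
  by rewrite inE (subsetP MU) ?sm ?orbT //; case/setD1P: mMw.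
have s1X : s1 \notin s2 |: (M :\ w).
  rewrite in_setU1 negb_or sMw // andbT; apply: contra ns12 => /eqP->.
  by case/andP: simp2 => s2U _; rewrite inE s2U eqxx.
have iX : independent e (s1 |: (s2 |: (M :\ w))).
  apply: independentU1; first apply: independentU1.
  - exact: sub_independent (subsetDl _ _) iM.
  - by move=> m; apply: notM.
  - move=> m /setU1P[->|]; last exact: notM.
    apply: contra ns12 => e12; case/andP: simp1 => s1U _.
    by rewrite inE s1U sym_e e12 orbT.
have XU : s1 |: (s2 |: (M :\ w)) \subset U.
  rewrite !subUset !sub1set (subset_trans (subsetDl _ _) MU) andbT.
  by case/andP: simp1 => -> _; case/andP: simp2.
have := well_covered_on_card wcU maxM XU iX.
by rewrite !cardsU1 s1X sMw // (cardsD1 w M) wM !add1n ltnn.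
Qed.

Lemma well_covered_simplicial_nbhd (U : {set T}) s1 s2 w :
  well_covered_on U -> simplicial U s1 -> simplicial U s2 ->
  w \in nbhd U s1 -> w \in nbhd U s2 -> nbhd U s1 = nbhd U s2.
Proof.
move=> wcU simp1 simp2 ws1 ws2.
have s12 := well_covered_simplicial_adj wcU simp1 simp2 ws1 ws2.
have [/andP[s1U _] /andP[s2U _]] := (simp1, simp2).
apply/eqP; rewrite eqEsubset !simplicial_nbhd_sub // -mem_nbhdC //.
Qed.

Lemma simplicial_max_independent (U : {set T}) : covered_by_simplices U ->
  exists2 J : {set T}, max_independent U J & {subset J <= simplicial U}.
Proof.
move=> covU; pose P X := independent e X && (X \subset [set s | simplicial U s]).
have P0 : P set0 by rewrite /P sub0set andbT; apply/independentP=> x y; rewrite inE.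
have [J /maxsetP[/andP[iJ /subsetP Jsimp] maxJ] _] := maxset_exists P0.
have simpJ : {subset J <= simplicial U} by move=> s /Jsimp; rewrite inE.
exists J => //; apply/max_independentP; split=> //.
  by apply/subsetP=> s /simpJ /andP[].
move=> y /setDP[yU yJ]; have [s simps ys] := covU y yU.
have [j jJ js] : exists2 j, j \in J & j \in nbhd U s.
  have [sJ|sJ] := boolP (s \in J).
    by exists s; case/andP: simps => sU _; rewrite // inE sU eqxx.
  have [/exists_inP[j jJ sj]|/exists_inPn noJ] := boolP [exists j in J, e s j].
    by exists j; rewrite // inE sj orbT andbT; case/andP: (simpJ j jJ).
  suff sJ' : s |: J = J by rewrite -sJ' setU11 in sJ.
  apply: maxJ (subsetUr _ _); rewrite /P independentU1 //= subUset sub1set inE simps.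
  by apply/subsetP=> j /Jsimp.
exists j => //; case/andP: simps => _ /cliqueP; apply=> //.
by apply: contraNneq yJ => ->.
Qed.

Lemma dominatingP (D : {set T}) :
  reflect (forall x, exists2 d, d \in D & d \in nbhd setT x) (dominating e D).
Proof.
apply: (iffP forallP) => [domD x|domD x].
  case/orP: (domD x) => [xD|/exists_inP[d dD xd]].
    by exists x; rewrite // in_nbhdT eqxx.
  by exists d; rewrite // in_nbhdT xd orbT.
have [d dD] := domD x; rewrite in_nbhdT => /predU1P[<-|xd]; first by rewrite dD.
by apply/orP; right; apply/exists_inP; exists d.
Qed.

Lemma max_independent_dominating S : max_independent setT S -> dominating e S.
Proof.
case/max_independentP=> _ _ domS; apply/dominatingP=> x.
have [xS|xS] := boolP (x \in S); first by exists x; rewrite // in_nbhdT eqxx.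
have [|s sS xs] := domS x; first by rewrite !inE xS.
by exists s; rewrite // in_nbhdT xs orbT.
Qed.

Lemma maxset_independent_minset_dominating S :
  maxset (independent e) S -> minset (dominating e) S.
Proof.
rewrite -max_independentT => maxS; apply/minsetP; split.
  exact: max_independent_dominating.
move=> B /dominatingP domB BS; apply/eqP; rewrite eqEsubset BS.
apply/subsetP=> x xS; have [d dB] := domB x; rewrite in_nbhdT => /predU1P[<-//|xd].
case/max_independentP: maxS => _ /independentP iS _.
by move: (iS x d xS (subsetP BS d dB)); rewrite xd.
Qed.

Lemma private_neighbour D x : minset (dominating e) D -> x \in D ->
  exists p, x \in nbhd setT p /\ {in D, forall d, d \in nbhd setT p -> d = x}.
Proof.
case/minsetP=> /dominatingP domD minD xD.
have : ~~ dominating e (D :\ x).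
  apply: contraT => /negPn domDx; have := minD _ domDx (subsetDl D [set x]).
  by move/setP/(_ x); rewrite !inE eqxx xD.
case/forallPn=> p; rewrite negb_or => /andP[pDx /exists_inPn noDx].
have dom_p d : d \in D -> d \in nbhd setT p -> d = x.
  move=> dD; rewrite in_nbhdT => /predU1P[dp|pd]; apply/eqP/negPn/negP=> dx.
    by move: pDx; rewrite -dp !inE dx dD.
  by move: (noDx d); rewrite !inE dx dD pd => /(_ isT).
have [d dD dp] := domD p; exists p; split=> //.
by rewrite -(dom_p d dD dp).
Qed.

Lemma domination_number_leq D : dominating e D -> domination_number e <= #|D|.
Proof. exact: bigmin_leq. Qed.

Lemma leq_domination_number k :
  k <= #|T| -> (forall D, dominating e D -> k <= #|D|) -> k <= domination_number e.
Proof.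
move=> kT kD; apply: (big_ind (fun m => k <= m)) => // a b ka kb.
by rewrite leq_min ka kb.
Qed.

Lemma leq_independence_number S : independent e S -> #|S| <= independence_number e.
Proof. exact: leq_bigmax_cond. Qed.

Lemma independence_number_leq k :
  (forall S, independent e S -> #|S| <= k) -> independence_number e <= k.
Proof. by move=> kS; apply/bigmax_leqP. Qed.

Lemma domination_eq_independence_well_covered :
  domination_number e = independence_number e -> well_covered e.
Proof.
move=> gamma_alpha; apply/well_covered_onT => S1 S2 max1 max2.
have cardS S : max_independent setT S -> #|S| = domination_number e.
  move=> maxS; apply/eqP; rewrite eqn_leq domination_number_leq ?max_independent_dominating //.
  by rewrite gamma_alpha leq_independence_number //; case/and3P: maxS.
by rewrite !cardS.
Qed.

Lemma well_dominated_well_covered : well_dominated e -> well_covered e.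
Proof.
move=> wd S1 S2 max1 max2.
by apply: wd; apply: maxset_independent_minset_dominating.
Qed.

Lemma simplicial_maximal_clique s : simplicial setT s -> maximal_clique e (nbhd setT s).
Proof.
case/andP=> _ cs; apply/maxsetP; split=> // B cB sB; apply/eqP.
rewrite eqEsubset sB andbT clique_sub_nbhd ?subsetT //.
by apply: (subsetP sB); rewrite in_nbhdT eqxx.
Qed.

Lemma simplicial_free s : simplicial setT s -> free_vertex e s.
Proof.
move=> simp_s; have maxN := simplicial_maximal_clique simp_s.
apply/cards1P; exists (nbhd setT s); apply/setP=> M; rewrite !inE.
apply/andP/eqP=> [[maxM sM]|->]; last by rewrite in_nbhdT eqxx.
case/maxsetP: maxM => cM /(_ _ (maxsetp maxN)) -> //.
by rewrite clique_sub_nbhd ?subsetT.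
Qed.

Lemma free_nbhd K v :
  maximal_clique e K -> v \in K -> free_vertex e v -> nbhd setT v \subset K.
Proof.
move=> maxK vK /cards1P[K0 K0P]; apply/subsetP=> y; rewrite in_nbhdT.
case/predU1P=> [->//|vy].
have cvy : clique e [set v; y].
  by apply/cliqueP=> a b /set2P[]-> /set2P[]->; rewrite ?eqxx // sym_e.
have [M maxM vyM] := maxset_exists cvy.
have inP N : maximal_clique e N -> v \in N -> N = K0.
  by move=> maxN vN; apply/set1P; rewrite -K0P inE maxN.
rewrite (inP K) // -(inP M) //; apply: (subsetP vyM); rewrite !inE eqxx ?orbT //.
Qed.

(** * Partitions into maximal cliques with a free vertex *)

Definition free_clique_partition (P : {set {set T}}) :=
  partition P [set: T] /\
  forall K, K \in P -> maximal_clique e K /\ exists2 v, v \in K & free_vertex e v.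

Section FreeCliquePartition.
Variable P : {set {set T}}.
Hypothesis freeP : free_clique_partition P.

Let coverP : cover P = setT.
Proof. by case: freeP => /and3P[/eqP]. Qed.

Let trivP : trivIset P.
Proof. by case: freeP => /and3P[]. Qed.

Let pblockP x : pblock P x \in P.
Proof. by rewrite pblock_mem // coverP. Qed.

Let mem_pblockP x : x \in pblock P x.
Proof. by rewrite mem_pblock coverP. Qed.

Let pblock_clique x : clique e (pblock P x).
Proof. by have [/maxsetp] := freeP.2 _ (pblockP x). Qed.

Let free_pblock K : K \in P -> exists2 v, v \in K & nbhd setT v \subset K.
Proof.
by move=> KP; have [maxK [v vK fv]] := freeP.2 K KP; exists v; rewrite // free_nbhd.
Qed.

Lemma card_partition_dominating D : dominating e D -> #|P| <= #|D|.
Proof.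
move/dominatingP=> domD; apply: leq_trans (leq_imset_card (pblock P) D).
apply: subset_leq_card; apply/subsetP=> K KP.
have [v vK vKsub] := free_pblock KP; have [d dD dv] := domD v.
by apply/imsetP; exists d; rewrite // (def_pblock trivP KP (subsetP vKsub d _)).
Qed.

Lemma card_independent_partition S : independent e S -> #|S| <= #|P|.
Proof.
move=> iS; rewrite -(card_in_imset (f := pblock P)).
  by apply: subset_leq_card; apply/subsetP=> K /imsetP[x _ ->]; apply: pblockP.
move=> x y xS yS pxy; apply: clique_independent_eq (pblock_clique x) iS _ _ xS yS.
  exact: mem_pblockP.
by rewrite pxy mem_pblockP.
Qed.

(* Send each vertex of [D] to the block of one of its private neighbours; a
   block can only come from the vertex of [D] dominating its free vertex. *)
Lemma card_minimal_dominating_partition D : minset (dominating e) D -> #|D| <= #|P|.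
Proof.
move=> minD; have domD : dominating e D by case/minsetP: minD.
have priv x : exists p, x \in D ->
    x \in nbhd setT p /\ {in D, forall d, d \in nbhd setT p -> d = x}.
  have [xD|xD] := boolP (x \in D); last by exists x.
  by have [p] := private_neighbour minD xD; exists p.
have [pr prP] := fin_all_exists priv.
rewrite -(card_in_imset (f := pblock P \o pr)).
  by apply: subset_leq_card; apply/subsetP=> K /imsetP[x _ ->]; apply: pblockP.
move=> x1 x2 x1D x2D /= px12.
have [v vK vKsub] := free_pblock (pblockP (pr x1)).
have [d dD dv] := (dominatingP _ domD) v; have dK := subsetP vKsub d dv.
have priv_d x : x \in D -> pblock P (pr x) = pblock P (pr x1) -> d = x.
  move=> xD pxx1; have [_ privx] := prP x xD; apply: privx dD _.
  have /cliqueP c1 := pblock_clique (pr x1).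
  have prK : pr x \in pblock P (pr x1) by rewrite -pxx1.
  by rewrite in_nbhdT; case: eqVneq => //= dpr; rewrite c1 // eq_sym.
by rewrite -(priv_d x1) // (priv_d x2).
Qed.

Lemma card_max_independent_partition S : max_independent setT S -> #|S| = #|P|.
Proof.
move=> maxS; apply/eqP; rewrite eqn_leq card_independent_partition; last by case/and3P: maxS.
exact/card_partition_dominating/max_independent_dominating.
Qed.

Lemma card_minimal_dominating D : minset (dominating e) D -> #|D| = #|P|.
Proof.
move=> minD; apply/eqP; rewrite eqn_leq card_minimal_dominating_partition //.
by rewrite card_partition_dominating //; case/minsetP: minD.
Qed.

Lemma free_clique_partition_invariants :
  [/\ domination_number e = independence_number e, well_covered e & well_dominated e].
Proof.
have i0 : independent e set0 by apply/independentP=> x y; rewrite inE.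
have [S _ maxS] := max_independent_exists (sub0set setT) i0.
split.
- apply/eqP; rewrite eqn_leq; apply/andP; split.
    apply: leq_trans (domination_number_leq (max_independent_dominating maxS)) _.
    by rewrite leq_independence_number //; case/and3P: maxS.
  apply: independence_number_leq => S' iS'.
  apply: leq_trans (card_independent_partition iS') _.
  apply: leq_domination_number => [|D]; last exact: card_partition_dominating.
  by rewrite -cardsT card_partition_dominating //; apply/forallP=> x; rewrite in_setT.
- by apply/well_covered_onT => S1 S2 max1 max2; rewrite !card_max_independent_partition.
- by move=> D1 D2 /card_minimal_dominating -> /card_minimal_dominating ->.
Qed.

End FreeCliquePartition.

(** * Simplicial vertices of chordal graphs *)

Hypothesis chord : chordal e.

Let adj_neq x y : e x y -> x != y.
Proof. by apply: contraTneq => ->; rewrite irr_e. Qed.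

Lemma chordal_noC4 a b c d : e a b -> e b c -> e c d -> e d a ->
  a != c -> b != d -> ~~ e a c -> ~~ e b d -> False.
Proof.
move=> ab bc cd da neac nebd nac nbd.
have uniq4 : uniq [:: a; b; c; d].
  by rewrite /= !inE !negb_or neac nebd (eq_sym a d) !adj_neq.
have cyc4 : cycle e [:: a; b; c; d] by rewrite /= ab bc cd da.
have [x0 [i [j [/andP[ij j4] j1 ends]]]] := chord uniq4 isT cyc4.
case: i ij ends j1 => [|[|[|i]]] //; case: j j4 => [|[|[|[|j]]]] //=.
all: by rewrite ?(negbTE nac) ?(negbTE nbd).
Qed.

(* A chord of the cycle [w :: q] either joins [w] to an inner vertex of [q] or
   shortcuts [q] to a shorter path of the same kind. *)
Lemma chordal_path_nbhd w q : uniq q -> sorted e q -> 1 < size q ->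
  e w (head w q) -> e w (last w q) -> ~~ e (head w q) (last w q) ->
  exists2 z, z \in q & [&& z != head w q, z != last w q & (z == w) || e w z].
Proof.
move: {2}(size q) (leqnn (size q)) => n; elim: n q => [|n IH] q qn uq sq q2; first by lia.
rewrite -nth0 -(nth_last w) => wa wb nab; apply/hasP/negPn/negP=> /hasPn noz.
have wq : w \notin q.
  by apply/negP=> /noz; rewrite eqxx andbT !adj_neq.
have cyc : cycle e (w :: q).
  rewrite /= rcons_path -(nth_last w) (sym_e _ w) wb andbT.
  by case: (q) sq wa {noz} => //= x r -> ->.
have uwq : uniq (w :: q) by rewrite cons_uniq wq.
have size_wq : 4 <= size (w :: q).
  rewrite /= ltnS ltn_neqAle q2 andbT; apply: contra nab => /eqP q2'.
  by move/(sortedP w): sq => /(_ 0); rewrite -q2' => /(_ isT).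
have [x0 [i [j [/andP[ij jq] j1 ends eij]]]] := chord uwq size_wq cyc.
case: j ij jq j1 ends eij => [|j]; first by rewrite ltn0.
rewrite /= ltnS => ij; rewrite ltnS => jq j1 ends.
case: i ij j1 ends => [|i] /= ij j1 ends.
  rewrite (set_nth_default w) // => eij.
  have q0 : 0 < size q := ltnW q2.
  case/negP: (noz _ (mem_nth w jq)); rewrite eij orbT andbT !nth_uniq ?ltn_predL ?j1 //=.
  by apply: contraNneq ends => ->; rewrite prednK.
have Sij : i.+1 < j by rewrite ltn_neqAle eq_sym j1.
have ijq : i < j < size q by rewrite ltnW.
rewrite !(set_nth_default w) ?(ltn_trans (ltnW Sij)) // => eij.
set q' := shortcut q i j.
have q'n : size q' <= n by rewrite -ltnS (leq_trans _ qn) ?size_shortcut_lt ?Sij.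
have uq' : uniq q' := subseq_uniq (shortcut_subseq q (ltnW Sij)) uq.
have sq' : sorted e q' := sorted_shortcut ijq eij sq.
have q'2 : 1 < size q' := size_shortcut_gt1 ijq.
have := IH q' q'n uq' sq' q'2; rewrite head_shortcut // last_shortcut // -nth0 -(nth_last w).
move=> /(_ wa wb nab) [z zq' zP].
by move: (noz z (mem_subseq (shortcut_subseq q (ltnW Sij)) zq')); rewrite zP.
Qed.

Section Separator.
Variables (U : {set T}) (x y : T).

Definition component :=
  [set z in U :\: nbhd U x | connect [rel a b in U :\: nbhd U x | e a b] y z].

Definition boundary := [set z in U :\: component | [exists c in component, e c z]].

Hypothesis yUx : y \in U :\: nbhd U x.

Lemma component_sub : component \subset U :\: nbhd U x.
Proof. by apply/subsetP=> z; rewrite inE => /andP[]. Qed.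

Lemma mem_component : y \in component.
Proof. by rewrite inE yUx connect0. Qed.

Lemma component_closed c z :
  c \in component -> z \in U :\: nbhd U x -> e c z -> z \in component.
Proof.
by move=> /setIdP[cA yc] zA cz; rewrite inE zA (connect_trans yc) // connect1 //= cA zA.
Qed.

Lemma boundary_adj z : z \in boundary -> e x z.
Proof.
move=> /setIdP[/setDP[zU zC] /exists_inP[c cC cz]].
have zA : z \notin U :\: nbhd U x by apply: contra zC => zA; apply: component_closed cC zA cz.
move: zA; rewrite !inE zU !andbT negbK => /orP[/eqP zx|//].
by move/subsetP/(_ c cC): component_sub; rewrite !inE -zx sym_e cz orbT andbT andNb.
Qed.

Lemma nbhd_component c : c \in component -> nbhd U c \subset component :|: boundary.
Proof.
move=> cC; apply/subsetP=> z; rewrite inE => /andP[zU /predU1P[->|cz]].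
  by rewrite inE cC.
have [zC|zC] := boolP (z \in component); first by rewrite inE zC.
rewrite in_setU (negbTE zC) /=; apply/setIdP; split; first exact/setDP.
by apply/exists_inP; exists c.
Qed.

(* Two non-adjacent boundary vertices are joined by a path through the
   component, which closes with [x] a cycle that has no admissible chord. *)
Lemma boundary_clique : clique e boundary.
Proof.
pose A := U :\: nbhd U x; pose r := [rel a b in A | e a b].
have r_sym : symmetric r by move=> a b /=; rewrite sym_e [(a \in A) && _]andbC.
have pathA c p : path r c p -> {subset p <= A}.
  elim: p c => [//|d p IHp] c /= /andP[/andP[/andP[_ dA] _] /IHp pA] z.
  by case/predU1P=> [->|/pA].
apply/cliqueP=> s1 s2 s1B s2B ns12; apply/negPn/negP=> n12.
have [xs1 xs2] := (boundary_adj s1B, boundary_adj s2B).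
have sA s : e x s -> s \notin A by move=> xs; rewrite !inE xs orbT andbT andNb.
move: s1B s2B; rewrite !inE => /andP[_ /exists_inP[c1 c1C c1s1]].
move=> /andP[_ /exists_inP[c2 c2C c2s2]].
have c12 : connect r c1 c2.
  move: c1C c2C => /setIdP[_ yc1] /setIdP[_ yc2].
  apply: connect_trans yc2; move: yc1; rewrite (sym_connect_sym r_sym); exact.
move: c2s2; case/connectP: c12 => p c1p ->; case/shortenP: c1p => p' c1p' up' _ c2s2.
have c1A : c1 \in A by move/subsetP: component_sub; apply.
have c1pA : {subset c1 :: p' <= A} by move=> z /predU1P[->|/(pathA _ _ c1p')].
set q := s1 :: rcons (c1 :: p') s2.
have lq : last x q = s2 by rewrite /q /= last_rcons.
have [||||||z zq] := chordal_path_nbhd (w := x) (q := q); rewrite ?lq //.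
- rewrite cons_uniq rcons_uniq up' andbT mem_rcons in_cons negb_or ns12 /=.
  by rewrite !(contra (c1pA _)) ?sA.
- rewrite /= rcons_path (sym_e s1) c1s1 c2s2 andbT.
  by apply: sub_path c1p' => a b /andP[].
move=> /and3P[zs1 zs2 xz]; move: zq.
rewrite /q in_cons mem_rcons in_cons (negbTE zs1) (negbTE zs2) /= => /c1pA.
by rewrite !inE => /andP[/negP nN zU]; apply: nN; rewrite zU xz.
Qed.

End Separator.

(* The component [C] of [y] together with its boundary [S], a
   clique, is smaller than [U]; applying the induction hypothesis at most twice,
   the second time away from a vertex of [S], yields a simplicial vertex of
   [C :|: S] inside [C], which is then simplicial in [U] as well. *)
Lemma simplicial_outside_nbhd (U : {set T}) x y : x \in U ->
  y \in U :\: nbhd U x -> exists2 s, s \in U :\: nbhd U x & simplicial U s.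
Proof.
move: {2}#|U| (leqnn #|U|) => n; elim: n U x y => [|n IH] U x y Un xU yUx.
  by move: Un; rewrite leqn0 => /eqP/cards0_eq U0; rewrite U0 inE in xU.
set C := component U x y; set S := boundary U x y; set W := C :|: S.
have CA : C \subset U :\: nbhd U x := component_sub U x y.
have WU : W \subset U.
  rewrite subUset (subset_trans CA (subsetDl _ _)).
  by apply/subsetP=> z /setIdP[/setDP[]].
have xW : x \notin W.
  rewrite in_setU negb_or; apply/andP; split.
    by apply/negP=> /(subsetP CA); rewrite !inE eqxx xU.
  by apply/negP=> /boundary_adj; rewrite irr_e.
have Wn : #|W| <= n.
  rewrite -ltnS (leq_trans _ Un) // proper_card //; apply/properP; split=> //.
  by exists x.
suff [s sC simps] : exists2 s, s \in C & simplicial W s.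
  exists s; first exact: subsetP CA s sC.
  by apply: simplicial_sub simps => //; apply: nbhd_component.
have yC : y \in C := mem_component yUx.
have [cW|ncW] := boolP (clique e W).
  exists y; rewrite // /simplicial in_setU yC (sub_clique _ cW) //; exact: nbhd_sub.
have inC s : s \in W -> s \notin S -> s \in C by case/setUP=> // ->.
have [z1 [z2 [z1W z2W]]] := not_clique_nbhd ncW.
have [s1 /setDP[s1W s1z1] simp1] := IH W z1 z2 Wn z1W z2W.
have [s1S|s1S] := boolP (s1 \in S); last by exists s1; rewrite ?inC.
have z1s1 : z1 \in W :\: nbhd W s1 by rewrite in_setD z1W andbT mem_nbhdC.
have [s2 /setDP[s2W s2s1] simp2] := IH W s1 z1 Wn s1W z1s1.
exists s2 => //; apply: inC => //; apply: contra s2s1 => s2S.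
have /cliqueP cS := boundary_clique U x y.
rewrite inE s2W; have [//|ns21] := eqVneq s2 s1; by rewrite cS // eq_sym.
Qed.

Lemma exists_simplicial (U : {set T}) : U != set0 -> exists s, simplicial U s.
Proof.
case/set0Pn=> x xU; have [cU|ncU] := boolP (clique e U).
  by exists x; rewrite /simplicial xU (sub_clique (nbhd_sub U x) cU).
have [z1 [z2 [z1U z2U]]] := not_clique_nbhd ncU.
by have [s _ simps] := simplicial_outside_nbhd z1U z2U; exists s.
Qed.

(* Without induced 4-cycles the traces of the neighbourhoods of [F] on [K] form
   a chain; any vertex of the smallest one works. *)
Lemma clique_common_neighbour (K F : {set T}) f0 : clique e K -> clique e F ->
  [disjoint K & F] -> f0 \in F -> {in F, forall f, exists2 k, k \in K & e f k} ->
  exists2 u, u \in K & {in F, forall f, e f u}.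
Proof.
move=> /cliqueP cK /cliqueP cF dKF f0F nbK.
pose N f := [set k in K | e f k].
have [f1 f1F minf1] := arg_minnP (fun f => #|N f|) f0F.
have [u uK f1u] := nbK f1 f1F.
exists u => // f fF; apply/negPn/negP=> nfu.
have [u2 /setIdP[u2K fu2] nf1u2] : exists2 u2, u2 \in N f & u2 \notin N f1.
  apply/subsetPn/negP=> sub; apply: (negP nfu).
  have : N f == N f1 by rewrite eqEcard sub minf1.
  by move/eqP/setP/(_ u); rewrite !inE uK f1u /= => ->.
rewrite inE u2K /= in nf1u2.
have neKF k g : k \in K -> g \in F -> k != g.
  by move=> kK gF; apply: contraTneq kK => ->; rewrite (disjointFl dKF gF).
apply: (chordal_noC4 (a := f1) (b := u) (c := u2) (d := f)) => //.
- by apply: cK; rewrite // (contraNneq _ nf1u2) // => <-.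
- by rewrite sym_e.
- by apply: cF; rewrite // (contraNneq _ nfu) // => ->.
- by rewrite eq_sym neKF.
- exact: neKF.
- by rewrite sym_e.
Qed.

(** * Well-covered chordal graphs *)

Section Lift.
Variables (U : {set T}) (t q : T).
Let K := nbhd U t.
Let U' := U :\: K.
Let Q := nbhd U' q.
Let F := [set f in Q | nbhd U' f == Q].
Hypotheses (wcU : well_covered_on U) (simp_t : simplicial U t) (simp_q : simplicial U' q).

Let qQ : q \in Q.
Proof. by case/andP: simp_q => qU' _; rewrite inE qU' eqxx. Qed.

Let QU' : Q \subset U'.
Proof. exact: nbhd_sub. Qed.

Let notQ z : z \in U' -> z \notin Q -> ~~ e q z.
Proof. by move=> zU'; rewrite inE zU' negb_or => /andP[]. Qed.

(* [u] together with a maximal independent set [J] of simplicial vertices of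
   [U] minus [N[u]] is maximal independent in [U]; trading [u] for [t] and [q],
   and the vertex of [J] in [Q] for one of its neighbours outside [Q], gives a
   larger independent set. *)
Section CommonNeighbour.
Variables (u : T) (J : {set T}).
Let U'' := U :\: nbhd U u.
Hypotheses (uK : u \in K) (Fu : {in F, forall f, e f u}).
Hypotheses (maxJ : max_independent U'' J) (simpJ : {subset J <= simplicial U''}).

Let uU : u \in U.
Proof. exact: subsetP (nbhd_sub U t) u uK. Qed.

Let qu : e q u.
Proof. by apply: Fu; rewrite inE qQ eqxx. Qed.

Let U''U' : U'' \subset U'.
Proof. by apply: setDS; apply: simplicial_nbhd_sub simp_t uK. Qed.

Let JU'' : J \subset U''.
Proof. by case/and3P: maxJ. Qed.

Let JU' : J \subset U'.
Proof. exact: subset_trans JU'' U''U'. Qed.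

Let iJ : independent e J.
Proof. by case/and3P: maxJ. Qed.

Let card_indep_U' (X : {set T}) : X \subset U' -> independent e X -> #|X| <= #|J|.
Proof.
move=> XU' iX; have XU := subset_trans XU' (subsetDl U K).
have tU : t \in U by case/andP: simp_t.
have uJ : u \notin J by apply/negP=> /(subsetP JU''); rewrite in_setD_nbhd eqxx andbF.
have tX : t \notin X by apply/negP=> /(subsetP XU'); rewrite in_setD_nbhd eqxx andbF.
have itX : independent e (t |: X).
  by apply: independentU1 => // z /(subsetP XU'); rewrite in_setD_nbhd => /and3P[].
have := well_covered_on_card wcU (max_independentU1 uU maxJ) _ itX.
by rewrite subUset sub1set tU XU !cardsU1 tX uJ !add1n ltnS; apply.
Qed.

Let J_meets_Q : exists2 phi, phi \in J & phi \in Q.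
Proof.
have [/exists_inP[phi phiJ phiQ]|/exists_inPn noQ] := boolP [exists phi in J, phi \in Q].
  by exists phi.
have qJ : q \notin J by apply: contraL qQ => /noQ.
have iqJ : independent e (q |: J).
  by apply: independentU1 => // j jJ; apply: notQ (noQ j jJ); apply: (subsetP JU').
have := card_indep_U' _ iqJ.
by rewrite subUset sub1set (subsetP QU') // JU' cardsU1 qJ ltnn => /(_ isT).
Qed.

Let escape phi : phi \in J -> phi \in Q ->
  exists g, [/\ g \in U'', e phi g & g \notin Q].
Proof.
move=> phiJ phiQ; have phiU'' := subsetP JU'' phi phiJ.
have nuphi : ~~ e u phi by move: phiU''; rewrite in_setD_nbhd => /and3P[].
have phiF : phi \notin F by apply: contra nuphi; rewrite sym_e; apply: Fu.
have [g gphi gQ] : exists2 g, g \in nbhd U' phi & g \notin Q.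
  apply/subsetPn; apply: contra phiF => sub; rewrite inE phiQ eqEsubset sub.
  exact: simplicial_nbhd_sub simp_q phiQ.
have gU' : g \in U' := subsetP (nbhd_sub U' phi) g gphi.
have phig : e phi g.
  by move: gphi; rewrite inE gU' => /predU1P[gphi|//]; rewrite gphi phiQ in gQ.
have nug : ~~ e u g.
  have /andP[_ /cliqueP cQ] := simp_q.
  apply/negP=> ug; apply: (chordal_noC4 (a := u) (b := q) (c := phi) (d := g)) => //.
  - by rewrite sym_e.
  - by apply: cQ; rewrite // (contraNneq _ nuphi) // => <-; rewrite sym_e.
  - by rewrite sym_e.
  - by apply: contraTneq phiU'' => <-; rewrite in_setD_nbhd eqxx andbF.
  - by apply: contraNneq gQ => <-.
  - exact: notQ.
exists g; split=> //; rewrite in_setD_nbhd nug andbT (subsetP (subsetDl U K)) //=.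
by apply: contraTneq gU' => ->; rewrite in_setD uK.
Qed.

Let escape_indep phi g j :
  phi \in J -> g \in U'' -> e phi g -> j \in J :\ phi -> ~~ e g j.
Proof.
move=> phiJ gU'' phig /setD1P[jphi jJ]; apply/negP=> gj.
have wcU'' := well_covered_on_nbhdD uU wcU.
have gj' : g \in nbhd U'' j by rewrite inE gU'' sym_e gj orbT.
have gphi' : g \in nbhd U'' phi by rewrite inE gU'' phig orbT.
have : j \in nbhd U'' phi.
  rewrite -(well_covered_simplicial_nbhd wcU'' (simpJ jJ) (simpJ phiJ) gj' gphi').
  by rewrite inE (subsetP JU'' _ jJ) eqxx.
rewrite inE => /andP[_ /predU1P[jeq|phij]]; first by rewrite jeq eqxx in jphi.
by move/independentP: iJ => /(_ _ _ phiJ jJ); rewrite phij.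
Qed.

Lemma common_neighbour_absurd : False.
Proof.
have [phi phiJ phiQ] := J_meets_Q.
have [g [gU'' phig gQ]] := escape phiJ phiQ.
have /independentP iJ' := iJ.
have gJ : g \notin J :\ phi.
  by apply/negP=> /setD1P[_ gJ]; move: (iJ' _ _ phiJ gJ); rewrite phig.
have qX : q \notin g |: (J :\ phi).
  rewrite in_setU1 negb_or; apply/andP; split; first by apply: contraNneq gQ => <-.
  by apply/negP=> /setD1P[_ /(subsetP JU'')]; rewrite in_setD_nbhd sym_e qu !andbF.
have iX : independent e (q |: (g |: (J :\ phi))).
  apply: independentU1; first apply: independentU1.
  - exact: sub_independent (subD1set J phi) iJ.
  - by move=> j; apply: escape_indep.
  - move=> j /setU1P[->|/setD1P[jphi jJ]]; first by apply: notQ; rewrite ?(subsetP U''U').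
    apply: notQ; first exact: (subsetP JU').
    have /andP[_ cQ] := simp_q.
    by apply: contra jphi => jQ; rewrite (clique_independent_eq cQ iJ jQ phiQ jJ phiJ).
have XU' : q |: (g |: (J :\ phi)) \subset U'.
  by rewrite !subUset !sub1set (subsetP QU') // (subsetP U''U') // (subset_trans (subD1set J phi)).
have := card_indep_U' XU' iX.
by rewrite !cardsU1 qX gJ (cardsD1 phi J) phiJ !add1n ltnn.
Qed.

End CommonNeighbour.

Lemma simplex_lift :
  (forall V : {set T}, #|V| < #|U| -> well_covered_on V -> covered_by_simplices V) ->
  exists2 f, simplicial U f & nbhd U f = Q.
Proof.
move=> IH; have [tU cK] : t \in U /\ clique e K by case/andP: simp_t.
have FQ : F \subset Q by apply/subsetP=> f /setIdP[].
have [/exists_inP[f /setIdP[fQ /eqP nf] noK]|] :=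
  boolP [exists f in F, [forall k in K, ~~ e f k]].
  have fU' : f \in U' := subsetP QU' f fQ.
  have nfU : nbhd U f = Q.
    rewrite -nf; apply/setP=> z; rewrite [z \in nbhd U f]inE [z \in nbhd U' f]inE in_setD.
    have [zK|] := boolP (z \in K); last by rewrite andTb.
    have -> : (z == f) = false by apply: contraTF fU' => /eqP <-; rewrite in_setD zK.
    by move/forall_inP/(_ z zK)/negbTE: noK => ->; rewrite andbF.
  exists f => //; rewrite /simplicial nfU (subsetP (subsetDl U K)) //.
  by case/andP: simp_q; rewrite -/Q.
move/exists_inPn=> nbK.
have nbK' : {in F, forall f, exists2 k, k \in K & e f k}.
  move=> f fF; move/forall_inPn: (nbK f fF) => [k kK /negPn fk]; by exists k.
have dKF : [disjoint K & F].
  rewrite -setI_eq0 -subset0; apply/subsetP=> z /setIP[zK /(subsetP FQ)/(subsetP QU')].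
  by rewrite in_setD zK.
have qF : q \in F by rewrite inE qQ eqxx.
have cQ : clique e Q by case/andP: simp_q.
have [u uK Fu] := clique_common_neighbour cK (sub_clique FQ cQ) dKF qF nbK'.
have uU : u \in U := subsetP (nbhd_sub U t) u uK.
have covU'' : covered_by_simplices (U :\: nbhd U u).
  exact: IH (card_nbhdD uU) (well_covered_on_nbhdD uU wcU).
have [J maxJ simpJ] := simplicial_max_independent covU''.
by case: (common_neighbour_absurd uK Fu maxJ simpJ).
Qed.

End Lift.

Lemma well_covered_on_simplices (U : {set T}) :
  well_covered_on U -> covered_by_simplices U.
Proof.
move: {2}#|U| (leqnn #|U|) => n; elim: n U => [|n IH] U Un wcU v vU.
  by move: Un; rewrite leqn0 => /eqP/cards0_eq U0; rewrite U0 inE in vU.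
have [t simp_t] : exists t, simplicial U t by apply/exists_simplicial/set0Pn; exists v.
have [vt|vt] := boolP (v \in nbhd U t); first by exists t.
have tU : t \in U by case/andP: simp_t.
have U'n : #|U :\: nbhd U t| <= n by rewrite -ltnS (leq_trans (card_nbhdD tU)).
have vU' : v \in U :\: nbhd U t by rewrite in_setD vt.
have [q simp_q vq] := IH _ U'n (well_covered_on_nbhdD tU wcU) v vU'.
have [|f simp_f fq] := simplex_lift wcU simp_t simp_q.
  by move=> V VU; apply: IH; rewrite -ltnS (leq_trans VU).
by exists f; rewrite // fq.
Qed.

Lemma well_covered_free_clique_partition :
  well_covered e -> exists P, free_clique_partition P.
Proof.
move/well_covered_onT=> wcT.
have covT := well_covered_on_simplices wcT.
exists (nbhd setT @: [set s | simplicial setT s]); split.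
  apply/and3P; split.
  - apply/eqP/setP=> v; rewrite cover_imset in_setT; apply/bigcupP.
    by have [s simp_s vs] := covT v (in_setT v); exists s; rewrite // inE.
  - apply/trivIsetP=> _ _ /imsetP[s1 simp1 ->] /imsetP[s2 simp2 ->] n12.
    rewrite -setI_eq0; apply: contraR n12 => /set0Pn[w /setIP[w1 w2]].
    move: simp1 simp2; rewrite !inE => simp1 simp2.
    by rewrite (well_covered_simplicial_nbhd wcT simp1 simp2 w1 w2).
  - apply/imsetP=> -[s _ /setP/(_ s)].
    by rewrite in_nbhdT eqxx inE.
move=> _ /imsetP[s simp_s ->]; rewrite inE in simp_s.
split; first exact: simplicial_maximal_clique.
by exists s; [rewrite in_nbhdT eqxx | exact: simplicial_free].
Qed.

End Graph.

Theorem corollary4p8 (T : finType) (e : rel T) :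
  simple_graph e -> chordal e ->
  [/\ (domination_number e = independence_number e <-> well_covered e),
      (well_covered e <-> well_dominated e)
    & (well_dominated e <->
       exists P : {set {set T}},
         partition P [set: T] /\
         (forall K, K \in P -> maximal_clique e K /\ exists2 v, v \in K & free_vertex e v))].
Proof.
move=> [sym_e irr_e] chord.
have to_partition := well_covered_free_clique_partition sym_e irr_e chord.
have from_partition (hP : exists P, free_clique_partition e P) :
    [/\ domination_number e = independence_number e, well_covered e & well_dominated e].
  by case: hP => P /(free_clique_partition_invariants sym_e irr_e).
have wd_wc := well_dominated_well_covered sym_e irr_e.
split; split.
- exact: domination_eq_independence_well_covered sym_e irr_e.
- by case/to_partition/from_partition.
- by case/to_partition/from_partition.
- exact: wd_wc.
- by move/wd_wc/to_partition.
- by case/from_partition.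
Qed.
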